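(* Let $i$ and $j$ be two components whose posterior intervals are nested, in the sense that $$0\le p_{\omega|y_i=1}\le p_{\omega|y_j=1}\le p_{\omega|y_j=0}\le p_{\omega|y_i=0}\le 1,$$ i.e. $I_i=[p_{\omega|y_i=1},p_{\omega|y_i=0}]\supseteq I_j=[p_{\omega|y_j=1},p_{\omega|y_j=0}]$. Then for every concave function $l^*:[0,1]\to\mathbb{R}$, $$L^{G}_\omega(i)\le L^{G}_\omega(j)\quad\text{and}\quad \mathrm{VoI}_G(i)\ge \mathrm{VoI}_G(j).$$
   Context: A system consists of $N$ binary components $c_1,\dots,c_N$ with random joint state $s=(s_1,\dots,s_N)\in\{0,1\}^N$ ($s_k=1$ means $c_k$ works, $s_k=0$ means it has failed), distributed according to an arbitrary prior distribution $p_s$. A structure function $\phi:\{0,1\}^N\to\{0,1\}$ gives the system state $u=\phi(s)$ ($u=0$ means system failure). The prior system failure probability is $p_\pi=\mathbb{P}[u=0]$. Inspecting component $c_k$ yields a binary observation $y_k$ ($y_k=0$ is an ''alarm'', $y_k=1$ a ''silence''), jointly distributed with $s$. Let $h_k=\mathbb{P}[y_k=0]$, assumed to satisfy $0<h_k<1$ so that the posterior system failure probabilities $p_{\omega|y_k=b}=\mathbb{P}[u=0\mid y_k=b]$, $b\in\{0,1\}$, are defined. Global metric: given a concave function $l^*:[0,1]\to\mathbb{R}$ (e.g. $l^*(p)=\min_{A}\,[p\,l_{A,0}+(1-p)\,l_{A,1}]$ over a finite set of actions $A$ with expected losses $l_{A,0},l_{A,1}$ when the system is failed/working), define the prior loss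 $L^G_\pi=l^*(p_\pi)$, the expected posterior loss of inspecting $c_k$ $$L^G_\omega(k)=h_k\,l^*(p_{\omega|y_k=0})+(1-h_k)\,l^*(p_{\omega|y_k=1}),$$ and the value of information $\mathrm{VoI}_G(k)=L^G_\pi-L^G_\omega(k)$. *)

From mathcomp Require Import all_boot all_order all_algebra.
Set Implicit Arguments. Unset Strict Implicit. Unset Printing Implicit Defensive.
Import Order.TTheory GRing.Theory Num.Theory.
Local Open Scope ring_scope.

(* A joint outcome: component states s and observations y, both in {0,1}^N
   (true = 1, false = 0). *)
Definition outcome (N : nat) : finType :=
  ({ffun 'I_N -> bool} * {ffun 'I_N -> bool})%type.

Definition is_pmf (R : numDomainType) (T : finType) (p : T -> R) : Prop :=
  (forall x, 0 <= p x) /\ \sum_(x : T) p x = 1.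

Definition prob (R : numDomainType) (T : finType) (p : T -> R) (E : pred T) : R :=
  \sum_(x : T | E x) p x.

Section Model.
Variables (R : realFieldType) (N : nat) (p : outcome N -> R)
          (phi : {ffun 'I_N -> bool} -> bool).

Definition h (k : 'I_N) : R := prob p (fun x => ~~ x.2 k).

(* prior system failure probability p_pi = P[u = 0] *)
Definition p_pi : R := prob p (fun x => ~~ phi x.1).

Definition p_post (k : 'I_N) (b : bool) : R :=
  prob p (fun x => ~~ phi x.1 && (x.2 k == b)) / prob p (fun x => x.2 k == b).

Variable (lstar : R -> R).

Definition L_pi : R := lstar p_pi.

Definition L_omega (k : 'I_N) : R :=
  h k * lstar (p_post k false) + (1 - h k) * lstar (p_post k true).

Definition VoI (k : 'I_N) : R := L_pi - L_omega k.
End Model.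

(* l : [0,1] -> R concave (only its values on [0,1] matter). *)
Definition concave_on01 (R : realFieldType) (l : R -> R) : Prop :=
  forall x y t : R, 0 <= x <= 1 -> 0 <= y <= 1 -> 0 <= t <= 1 ->
    t * l x + (1 - t) * l y <= l (t * x + (1 - t) * y).

(** Inspecting component [k] splits the prior [p_pi] into the two posteriors
    [p_post k false] and [p_post k true] with weights [h k] and [1 - h k]; by
    the law of total probability both inspections [i] and [j] give two-point
    distributions with the same mean [p_pi].  When the support of the one for
    [j] lies inside that of the one for [i], each posterior of [j] is a convex
    combination of the posteriors of [i], so concavity of [lstar] makes the
    expected posterior loss of [i] the smaller one.  The prior loss is the same
    for both, hence the order of the values of information is reversed. *)

From mathcomp Require Import all_boot all_order all_algebra.
From mathcomp Require Import ring lra.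
Set Implicit Arguments. Unset Strict Implicit. Unset Printing Implicit Defensive.
Import Order.TTheory GRing.Theory Num.Theory.
Local Open Scope ring_scope.

Lemma concave_chord_le (R : realFieldType) (l : R -> R) (a1 a0 b : R) :
  concave_on01 l -> 0 <= a1 -> a1 <= b -> b <= a0 -> a0 <= 1 -> a1 < a0 ->
  (b - a1) / (a0 - a1) * l a0 + (1 - (b - a1) / (a0 - a1)) * l a1 <= l b.
Proof.
move=> l_concave a1_ge0 a1_le_b b_le_a0 a0_le1 a1_lt_a0.
have gap_gt0 : 0 < a0 - a1 by rewrite subr_gt0.
set t := (b - a1) / (a0 - a1).
have t_ge0 : 0 <= t by apply: divr_ge0; lra.
have t_le1 : t <= 1 by rewrite /t ler_pdivrMr // mul1r; lra.
have -> : b = t * a0 + (1 - t) * a1 by rewrite /t; field; rewrite gt_eqF.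
by apply: l_concave; apply/andP; split => //; lra.
Qed.

Lemma concave_spread_le (R : realFieldType) (l : R -> R) (a1 a0 b1 b0 s t : R) :
  concave_on01 l -> 0 <= a1 -> a1 <= b1 -> b1 <= b0 -> b0 <= a0 -> a0 <= 1 ->
  0 <= t <= 1 ->
  s * a0 + (1 - s) * a1 = t * b0 + (1 - t) * b1 ->
  s * l a0 + (1 - s) * l a1 <= t * l b0 + (1 - t) * l b1.
Proof.
move=> l_concave a1_ge0 a1_le_b1 b1_le_b0 b0_le_a0 a0_le1 /andP[t_ge0 t_le1] same_mean.
have [a1_lt_a0 | a0_le_a1] := ltrP a1 a0; last first.
  have [-> -> ->] : [/\ a0 = a1, b0 = a1 & b1 = a1].
    by split; apply/eqP; rewrite eq_le; apply/andP; split; lra.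
  by rewrite -!mulrDl !subrKC.
have gap_neq0 : a0 - a1 != 0 by rewrite subr_eq0 gt_eqF.
have chord0 := concave_chord_le l_concave a1_ge0 (le_trans a1_le_b1 b1_le_b0)
  b0_le_a0 a0_le1 a1_lt_a0.
have chord1 := concave_chord_le l_concave a1_ge0 a1_le_b1
  (le_trans b1_le_b0 b0_le_a0) a0_le1 a1_lt_a0.
set t0 := (b0 - a1) / (a0 - a1) in chord0.
set t1 := (b1 - a1) / (a0 - a1) in chord1.
(* equal means: the weight [s] is the [t]-mixture of the chord coordinates *)
have s_mix : s = t * t0 + (1 - t) * t1.
  have -> : s = (s * a0 + (1 - s) * a1 - a1) / (a0 - a1) by field.
  by rewrite same_mean /t0 /t1; field.
have -> : s * l a0 + (1 - s) * l a1 =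
    t * (t0 * l a0 + (1 - t0) * l a1) + (1 - t) * (t1 * l a0 + (1 - t1) * l a1).
  by rewrite s_mix; ring.
by apply: lerD; apply: ler_wpM2l => //; lra.
Qed.

Lemma probC (R : numDomainType) (T : finType) (p : T -> R) (E : pred T) :
  \sum_(x : T) p x = 1 -> prob p (predC E) = 1 - prob p E.
Proof. by move=> <-; rewrite /prob [in RHS](bigID E) /= addrAC subrr add0r. Qed.

Lemma probID (R : numDomainType) (T : finType) (p : T -> R) (E F : pred T) :
  prob p E = prob p (predI E F) + prob p (predI E (predC F)).
Proof. exact: bigID. Qed.

Lemma h_post_mean (R : realFieldType) (N : nat) (p : outcome N -> R)
    (phi : {ffun 'I_N -> bool} -> bool) (k : 'I_N) :
  \sum_x p x = 1 -> h p k != 0 -> h p k != 1 ->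
  h p k * p_post p phi k false + (1 - h p k) * p_post p phi k true = p_pi p phi.
Proof.
move=> p_sum1 h_neq0 h_neq1.
have obs_false : prob p (fun x => x.2 k == false) = h p k.
  by apply: eq_bigl => x; case: (x.2 k).
have obs_true : prob p (fun x => x.2 k == true) = 1 - h p k.
  by rewrite /h -probC //; apply: eq_bigl => x /=; case: (x.2 k).
have compl_neq0 : 1 - h p k != 0 by rewrite subr_eq0 eq_sym.
rewrite /p_post obs_false obs_true [h p k * _]mulrC [(1 - h p k) * _]mulrC !divfK //.
rewrite /p_pi [RHS](probID _ _ (fun x : outcome N => ~~ x.2 k)).
by congr (_ + _); apply: eq_bigl => x /=; case: (x.2 k); rewrite ?andbT ?andbF.
Qed.

Theorem mainTheorem1 (R : realFieldType) (N : nat) (p : outcome N -> R)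
    (phi : {ffun 'I_N -> bool} -> bool) (i j : 'I_N) :
  is_pmf p ->
  0 < h p i < 1 -> 0 < h p j < 1 ->
  0 <= p_post p phi i true -> p_post p phi i true <= p_post p phi j true ->
  p_post p phi j true <= p_post p phi j false ->
  p_post p phi j false <= p_post p phi i false -> p_post p phi i false <= 1 ->
  forall lstar : R -> R, concave_on01 lstar ->
    L_omega p phi lstar i <= L_omega p phi lstar j /\
    VoI p phi lstar j <= VoI p phi lstar i.
Proof.
move=> [_ p_sum1] hi hj ai1_ge0 ai1_le_aj1 aj1_le_aj0 aj0_le_ai0 ai0_le1 l l_concave.
have mean k : 0 < h p k < 1 ->
    h p k * p_post p phi k false + (1 - h p k) * p_post p phi k true = p_pi p phi.
  case/andP=> hk_gt0 hk_lt1.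
  by apply: h_post_mean; [| rewrite gt_eqF | rewrite lt_eqF].
have Li_le_Lj : L_omega p phi l i <= L_omega p phi l j.
  apply: concave_spread_le => //; first by case/andP: hj => *; apply/andP; split; lra.
  by rewrite !mean.
by split; rewrite /VoI; lra.
Qed.
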